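(* Let $V$ be a finite set, $\{\eta(t),t\ge0\}$ a consistent configuration process on $\Omega$, and $\mathbf x=(x_1,\dots,x_n)\in V_n$. Then for all $v\in V$ and $t\ge0$, $$\mathbb E_{\phi(\mathbf x)}[\eta_v(t)]=\sum_{j=1}^n\mathbf P_{x_j}\big(X^{\mathrm{rw}}(t)=v\big),$$ where $\mathbf P_u$ is the law of the random walk $X^{\mathrm{rw}}$ associated to $\{\eta(t)\}$ started at $u$.
   Context: $\Lambda\subseteq\mathbb N_0$; $\Omega_n=\{\eta\in\Lambda^V:\sum_x\eta_x=n\}$, $\Omega=\bigcup_n\Omega_n$; $\phi(\mathbf y)=\sum_i\delta_{y_i}$; $V_n=\{\mathbf x\in V^n:\phi(\mathbf x)\in\Omega_n\}$. A configuration process is a particle-number-conserving Markov process on $\Omega$ with generator $\mathcal L$; it is consistent if $[\mathcal L,\mathcal A]=0$, where $\mathcal Af(\eta)=\sum_{x}\eta_xf(\eta-\delta_x)$ (terms with $\eta_x=0$ vanish). The associated random walk $\{X^{\mathrm{rw}}(t)\}$ on $V$ is defined by: when $\eta(0)=\delta_u$, then $\eta(t)=\delta_{X^{\mathrm{rw}}(t)}$ with $X^{\mathrm{rw}}(0)=u$ (i.e. it is the motion of a single particle). *)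

From HB Require Import structures.
From mathcomp Require Import all_boot all_order all_algebra.
From mathcomp Require Import all_classical all_reals all_analysis.
Set Implicit Arguments. Unset Strict Implicit. Unset Printing Implicit Defensive.
Import Order.TTheory GRing.Theory Num.Theory.
Import numFieldNormedType.Exports.
Local Open Scope ring_scope.

Section ConfigProcess.
Variables (R : realType) (V : finType).

Definition config := {ffun V -> nat}.

Definition tot (eta : config) : nat := (\sum_(x : V) eta x)%N.

Definition inOmega (Lam : pred nat) (eta : config) : bool := [forall x, Lam (eta x)].

Definition delta (u : V) : config := [ffun w => nat_of_bool (w == u)].

(* eta - delta_x (truncated; only used with eta_x >= 1, other terms vanish) *)
Definition sub_delta (eta : config) (x : V) : config :=
  [ffun w => (eta w - nat_of_bool (w == x))%N].

Definition phi (y : seq V) : config := [ffun w => (\sum_(z <- y) delta z w)%N].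

(* configurations of total mass n, indexed through {ffun V -> 'I_n.+1} *)
Definition of_ord (n : nat) (g : {ffun V -> 'I_n.+1}) : config :=
  [ffun w => nat_of_ord (g w)].

Definition gen (Lam : pred nat) (q : config -> config -> R) (f : config -> R)
  (eta : config) : R :=
  \sum_(g : {ffun V -> 'I_(tot eta).+1} |
        (tot (of_ord g) == tot eta) && inOmega Lam (of_ord g))
     q eta (of_ord g) * (f (of_ord g) - f eta).

Definition annih (f : config -> R) (eta : config) : R :=
  \sum_(x : V) (eta x)%:R * f (sub_delta eta x).

(* Transition semigroup P_t = exp(t L):
   (P_t f)(eta) = E_eta[f(eta(t))] = sum_k t^k/k! (L^k f)(eta). *)
Definition semigroup (Lam : pred nat) (q : config -> config -> R) (t : R)
  (f : config -> R) (eta : config) : R :=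
  limn [series t ^+ k / (k`!)%:R * iter k (gen Lam q) f eta]_k.

Definition config_process (Lam : pred nat) (q : config -> config -> R) : Prop :=
  forall eta zeta, inOmega Lam eta -> inOmega Lam zeta -> eta != zeta ->
    0 <= q eta zeta.

Definition consistent (Lam : pred nat) (q : config -> config -> R) : Prop :=
  forall (f : config -> R) (eta : config), inOmega Lam eta ->
    gen Lam q (annih f) eta = annih (gen Lam q f) eta.

End ConfigProcess.

From HB Require Import structures.
From mathcomp Require Import all_boot all_order all_algebra.
From mathcomp Require Import all_classical all_reals all_analysis.
From mathcomp Require Import ring.
Set Implicit Arguments. Unset Strict Implicit. Unset Printing Implicit Defensive.
Import Order.TTheory GRing.Theory Num.Theory.
Import numFieldNormedType.Exports.
Local Open Scope ring_scope.

(** Consistency [L, A] = 0 propagates to [L^k A^m = A^m L^k] on Omega, and on a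
    configuration with [m + 1] particles [A^m F (eta) = m! * sum_u eta_u F (delta_u)].
    Taking for [F] the indicator of [delta_v], the occupation [eta |-> eta_v] equals
    [A^m F / m!] on that particle-number level, which [L] preserves; hence
    [L^k eta_v = sum_u eta_u (L^k F)(delta_u)] at every order [k]. Since [L] acts on
    a finite level, its exponential series converge absolutely, and the identity
    passes to [exp(tL)] term by term. *)

Lemma sum_pred1_mul (R : pzSemiRingType) (I : finType) (i : I) (G : I -> R) :
  \sum_j (j == i)%:R * G j = G i.
Proof. by under eq_bigr do rewrite mulr_natl mulrb; rewrite -big_mkcond big_pred1_eq. Qed.

Section Annihilation.
Variables (R : realType) (V : finType).

Lemma eq_delta (u v : V) : (delta u == delta v) = (u == v).
Proof. by apply/eqP/eqP => [/ffunP/(_ u)|->//]; rewrite !ffunE eqxx; case: eqP. Qed.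

Lemma tot_eq0 (eta : config V) u : tot eta = 0%N -> eta u = 0%N.
Proof. by move/eqP; rewrite /tot sum_nat_eq0 => /forallP/(_ u)/eqP. Qed.

Lemma tot_eq1 (eta : config V) : tot eta = 1%N -> exists u, eta = delta u.
Proof.
move=> tot1; have [u eta_u_pos|eta0] := pickP (fun u => 0 < eta u)%N; last first.
  by move: tot1; rewrite /tot big1 // => u _; apply/eqP; rewrite eqn0Ngt eta0.
exists u; move: tot1; rewrite /tot (bigD1 u) //= => tot1.
have eta_u1 : eta u = 1%N by apply/eqP; rewrite eqn_leq eta_u_pos -tot1 leq_addr.
move: tot1; rewrite eta_u1 -[1%N]addn0 => /addnI/eqP; rewrite sum_nat_eq0 => /forallP rest.
apply/ffunP => w; rewrite ffunE.
by case: eqP => [->|/eqP wu] //; apply/eqP; move/implyP: (rest w); exact.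
Qed.

Lemma tot_sub_delta (eta : config V) x :
  (0 < eta x)%N -> tot (sub_delta eta x) = (tot eta).-1.
Proof.
move=> eta_x_pos; rewrite /tot (bigD1 x) //= [in RHS](bigD1 x) //= ffunE eqxx.
rewrite (eq_bigr (fun w => eta w)) => [|w /negbTE wx]; last by rewrite ffunE wx subn0.
by case: (eta x) eta_x_pos => // k _; rewrite subn1 addSn.
Qed.

Lemma annih_scale (c : R) (F : config V -> R) eta :
  annih (fun e => c * F e) eta = c * annih F eta.
Proof. by rewrite /annih mulr_sumr; apply: eq_bigr => x _; rewrite mulrCA. Qed.

Lemma annih_eq_on_tot N (F G : config V -> R) :
  (forall e, tot e = N -> F e = G e) ->
  forall eta, tot eta = N.+1 -> annih F eta = annih G eta.
Proof.
move=> FG eta totN; apply: eq_bigr => x _.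
have [->|eta_x_pos] := posnP (eta x); first by rewrite !mul0r.
by rewrite FG // tot_sub_delta // totN.
Qed.

Definition particle_sum (F : config V -> R) (eta : config V) : R :=
  \sum_u (eta u)%:R * F (delta u).

Lemma particle_sum_delta (F : config V -> R) u : particle_sum F (delta u) = F (delta u).
Proof. by rewrite /particle_sum; under eq_bigr do rewrite ffunE; rewrite sum_pred1_mul. Qed.

Lemma annih_particle_sum (F : config V -> R) eta :
  annih (particle_sum F) eta = ((tot eta)%:R - 1) * particle_sum F eta.
Proof.
have term x : (eta x)%:R * particle_sum F (sub_delta eta x)
            = (eta x)%:R * (particle_sum F eta - F (delta x)).
  have [->|eta_x_pos] := posnP (eta x); first by rewrite !mul0r.
  congr (_ * _); rewrite -(sum_pred1_mul x (fun u => F (delta u))) -sumrB.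
  apply: eq_bigr => u _; rewrite -mulrBl ffunE.
  by case: eqP => [->|_]; rewrite ?subn0 ?subr0 // natrB.
rewrite /annih (eq_bigr _ (fun x _ => term x)).
under eq_bigr do rewrite mulrBr.
by rewrite sumrB -mulr_suml /tot natr_sum mulrBl mul1r.
Qed.

Lemma iter_annih m (F : config V -> R) eta :
  tot eta = m.+1 -> iter m (@annih R V) F eta = (m`!)%:R * particle_sum F eta.
Proof.
elim: m eta => [|m IH] eta totm.
  by have [u ->] := tot_eq1 totm; rewrite particle_sum_delta mul1r.
rewrite iterS (annih_eq_on_tot IH) // annih_scale annih_particle_sum totm.
by rewrite mulrA -natr1 addrK -natrM mulnC.
Qed.

Lemma particle_sum_phi (F : config V -> R) (s : seq V) :
  particle_sum F (phi s) = \sum_(z <- s) F (delta z).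
Proof.
rewrite /particle_sum; under eq_bigr do rewrite ffunE natr_sum mulr_suml.
rewrite exchange_big /=; apply: eq_bigr => z _.
by under eq_bigr do rewrite ffunE; rewrite sum_pred1_mul.
Qed.

Lemma particle_sum_indicator (v : V) eta :
  particle_sum (fun e => (e == delta v)%:R) eta = (eta v)%:R.
Proof.
by rewrite /particle_sum; under eq_bigr do rewrite eq_delta mulrC; rewrite sum_pred1_mul.
Qed.

End Annihilation.

Section Generator.
Variables (R : realType) (V : finType) (Lam : pred nat) (q : config V -> config V -> R).

Definition level (N : nat) := [pred eta : config V | (tot eta == N) && inOmega Lam eta].

Lemma gen_level N (F : config V -> R) eta : tot eta = N ->
  gen Lam q F eta = \sum_(g : {ffun V -> 'I_N.+1} | of_ord g \in level N)
                      q eta (of_ord g) * (F (of_ord g) - F eta).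
Proof. by move=> <-. Qed.

Lemma gen_eq_on_level N (F G : config V -> R) :
  {in level N, F =1 G} -> {in level N, gen Lam q F =1 gen Lam q G}.
Proof.
move=> FG eta eta_N; have /andP[/eqP totN _] := eta_N.
by rewrite !(gen_level _ totN); apply: eq_bigr => g g_N; rewrite !FG.
Qed.

Lemma iter_gen_eq_on_level N k (F G : config V -> R) :
  {in level N, F =1 G} -> {in level N, iter k (gen Lam q) F =1 iter k (gen Lam q) G}.
Proof. by move=> FG; elim: k => //= k IH; exact: gen_eq_on_level. Qed.

Lemma gen_scale (c : R) (F : config V -> R) eta :
  gen Lam q (fun e => c * F e) eta = c * gen Lam q F eta.
Proof. by rewrite /gen mulr_sumr; apply: eq_bigr => g _; rewrite -mulrBr mulrCA. Qed.

Lemma iter_gen_scale k (c : R) (F : config V -> R) eta :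
  iter k (gen Lam q) (fun e => c * F e) eta = c * iter k (gen Lam q) F eta.
Proof. by elim: k eta => // k IH eta; rewrite /= (funext IH) gen_scale. Qed.

Lemma of_ord_onto N (eta : config V) :
  tot eta = N -> exists e : {ffun V -> 'I_N.+1}, of_ord e = eta.
Proof.
move=> <-; exists [ffun w => inord (eta w)]; apply/ffunP => w.
by rewrite !ffunE inordK // ltnS /tot (bigD1 w) //= leq_addr.
Qed.

Definition rate_mass N : R :=
  \sum_(e : {ffun V -> 'I_N.+1} | of_ord e \in level N)
    \sum_(g : {ffun V -> 'I_N.+1} | of_ord g \in level N) `|q (of_ord e) (of_ord g)|.

Lemma norm_gen_le N (F : config V -> R) (M : R) :
  {in level N, forall e, `|F e| <= M} ->
  {in level N, forall eta, `|gen Lam q F eta| <= rate_mass N *+ 2 * M}.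
Proof.
move=> FM eta eta_N; have /andP[/eqP totN _] := eta_N.
have M_ge0 : 0 <= M := le_trans (normr_ge0 _) (FM _ eta_N).
have [e e_eta] := of_ord_onto totN.
set row := \sum_(g : {ffun V -> 'I_N.+1} | of_ord g \in level N) `|q eta (of_ord g)|.
have row_le : row <= rate_mass N.
  rewrite /rate_mass [in X in _ <= X](bigD1 e) ?e_eta //= lerDl.
  by rewrite sumr_ge0 // => *; rewrite sumr_ge0.
rewrite (gen_level _ totN); apply: le_trans (ler_norm_sum _ _ _) _.
apply: (@le_trans _ _ (\sum_(g : {ffun V -> 'I_N.+1} | of_ord g \in level N)
                         `|q eta (of_ord g)| * (M *+ 2))).
  apply: ler_sum => g g_N; rewrite normrM ler_wpM2l //.
  by rewrite (le_trans (ler_normB _ _)) // mulr2n lerD ?FM.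
by rewrite -mulr_suml mulrnAr mulrnAl ler_wMn2r // ler_wpM2r.
Qed.

Lemma norm_iter_gen_le N k (F : config V -> R) (M : R) :
  {in level N, forall e, `|F e| <= M} ->
  {in level N, forall eta, `|iter k (gen Lam q) F eta| <= (rate_mass N *+ 2) ^+ k * M}.
Proof.
move=> FM; elim: k => [|k IH] eta eta_N; first by rewrite mul1r FM.
by rewrite exprS -mulrA; exact: norm_gen_le.
Qed.

Lemma cvgn_semigroup_series (F : config V -> R) (t : R) eta : inOmega Lam eta ->
  cvgn [series t ^+ k / (k`!)%:R * iter k (gen Lam q) F eta]_k.
Proof.
move=> Oeta; set N := tot eta.
set M : R := \sum_(e : {ffun V -> 'I_N.+1}) `|F (of_ord e)|.
have eta_N : eta \in level N by rewrite inE eqxx.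
have FM : {in level N, forall e, `|F e| <= M}.
  move=> e /andP[/eqP totN _]; have [g <-] := of_ord_onto totN.
  by rewrite /M (bigD1 g) //= lerDl sumr_ge0.
have M_ge0 : 0 <= M := le_trans (normr_ge0 _) (FM _ eta_N).
have Q_ge0 : 0 <= rate_mass N *+ 2.
  by rewrite mulrn_wge0 // sumr_ge0 // => *; rewrite sumr_ge0.
apply: normed_cvg.
apply: (@series_le_cvg _ _ (M *: exp_coeff (`|t| * (rate_mass N *+ 2)))).
- by move=> k; exact: normr_ge0.
- by move=> k; rewrite /= mulr_ge0 // exp_coeff_ge0 // mulr_ge0.
- move=> k; rewrite /exp_coeff.
  change (`|t ^+ k / k`!%:R * iter k (gen Lam q) F eta|
          <= M * ((`|t| * (rate_mass N *+ 2)) ^+ k / k`!%:R)).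
  rewrite !normrM normfV normrX [`|k`!%:R|]ger0_norm //.
  have -> : M * ((`|t| * (rate_mass N *+ 2)) ^+ k / k`!%:R)
          = `|t| ^+ k / k`!%:R * ((rate_mass N *+ 2) ^+ k * M) by rewrite exprMn; ring.
  by rewrite ler_wpM2l ?divr_ge0 ?exprn_ge0 // norm_iter_gen_le.
- exact/is_cvg_seriesZ/is_cvg_series_exp_coeff.
Qed.

Hypothesis Lam_down : forall a b, (b <= a)%N -> Lam a -> Lam b.

Lemma inOmega_le (eta zeta : config V) :
  (forall w, zeta w <= eta w)%N -> inOmega Lam eta -> inOmega Lam zeta.
Proof. by move=> le_ze /forallP Oeta; apply/forallP => w; exact: Lam_down (Oeta w). Qed.

Lemma inOmega_sub_delta (eta : config V) x : inOmega Lam eta -> inOmega Lam (sub_delta eta x).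
Proof. by apply: inOmega_le => w; rewrite ffunE leq_subr. Qed.

Lemma annih_eq_on_Omega (F G : config V -> R) :
  {in inOmega Lam, F =1 G} -> {in inOmega Lam, annih F =1 annih G}.
Proof.
move=> FG eta Oeta; apply: eq_bigr => x _.
by rewrite FG //; exact: inOmega_sub_delta.
Qed.

Hypothesis consistent_q : consistent Lam q.

Lemma iter_gen_annih k (F : config V -> R) :
  {in inOmega Lam, iter k (gen Lam q) (annih F) =1 annih (iter k (gen Lam q) F)}.
Proof.
elim: k => // k IH eta Oeta /=; rewrite -consistent_q //.
apply: (@gen_eq_on_level (tot eta)); last by apply/andP.
by move=> e /andP[_ Oe]; exact: IH.
Qed.

Lemma iter_gen_iter_annih m k (F : config V -> R) :
  {in inOmega Lam, iter k (gen Lam q) (iter m (@annih R V) F)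
                   =1 iter m (@annih R V) (iter k (gen Lam q) F)}.
Proof.
elim: m => // m IH eta Oeta /=.
by rewrite iter_gen_annih //; exact: annih_eq_on_Omega.
Qed.

Lemma iter_gen_occupation k (v : V) :
  {in inOmega Lam, iter k (gen Lam q) (fun e => (e v)%:R)
                   =1 particle_sum (iter k (gen Lam q) (fun e => (e == delta v)%:R))}.
Proof.
move=> eta Oeta; case Etot: (tot eta) => [|m].
  rewrite /particle_sum big1 => [|u _]; last by rewrite tot_eq0 // mul0r.
  rewrite -(mul0r (iter k (gen Lam q) (fun e => (e v)%:R) eta)) -iter_gen_scale.
  apply: (@iter_gen_eq_on_level 0) => [e /andP[/eqP tot_e _]|]; last by rewrite inE Etot eqxx.
  by rewrite tot_eq0 // mul0r.
have fact_neq0 : (m`!)%:R != 0 :> R by rewrite pnatr_eq0 -lt0n fact_gt0.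
apply: (mulfI fact_neq0); rewrite -iter_annih // -iter_gen_iter_annih // -iter_gen_scale.
apply: (@iter_gen_eq_on_level m.+1) => [e /andP[/eqP tot_e _]|]; last by rewrite inE Etot eqxx.
by rewrite iter_annih // particle_sum_indicator.
Qed.

End Generator.

Theorem corollary3p10 (R : realType) (V : finType) (Lam : pred nat)
  (q : config V -> config V -> R) (n : nat) (x : n.-tuple V) :
  (forall a b : nat, (b <= a)%N -> Lam a -> Lam b) ->
  config_process Lam q ->
  consistent Lam q ->
  inOmega Lam (phi x) ->
  forall (v : V) (t : R), 0 <= t ->
    semigroup Lam q t (fun eta => (eta v)%:R) (phi x)
    = \sum_(j < n)
        semigroup Lam q t (fun eta => (eta == delta v)%:R) (delta (tnth x j)).
Proof.
move=> Lam_down _ consistent_q Ox v t _.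
set s := fun j : 'I_n => [series t ^+ k / (k`!)%:R *
  iter k (gen Lam q) (fun eta => (eta == delta v)%:R) (delta (tnth x j))]_k.
have Odelta j : inOmega Lam (delta (tnth x j)).
  apply: inOmega_le Ox => // w.
  by rewrite [phi x w]ffunE (big_rem (tnth x j)) ?mem_tnth //= leq_addr.
rewrite /semigroup.
have -> : [series t ^+ k / (k`!)%:R * iter k (gen Lam q) (fun eta => (eta v)%:R) (phi x)]_k
          = fun N => \sum_(j < n) s j N.
  apply/funext => N; rewrite /series /= exchange_big /=; apply: eq_bigr => k _.
  by rewrite iter_gen_occupation // particle_sum_phi big_tuple mulr_sumr.
apply: cvg_lim => //; apply: cvg_big => [|j _]; first exact: add_continuous.
exact: cvgn_semigroup_series.
Qed.
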